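(* Let $A$ be a commutative ring and $\varphi:L\to L'$ an isogeny of free abelian groups of finite rank whose degree $\deg\varphi=\#(L'/\varphi(L))$ is invertible in $A$. Then the induced homomorphism $\varphi_R:R(L)\to R(L')$ is an isomorphism.
   Context: An isogeny is an injective homomorphism with finite cokernel. For a free abelian group $L$ of finite rank, $R(L)=\varprojlim_kA[L]/J^k$ is the completion of the group ring $A[L]$ (basis $\delta_\ell$) at its augmentation ideal $J$. The map $\varphi_R$ is the continuous $A$-algebra homomorphism induced by $\delta_\ell\mapsto\delta_{\varphi(\ell)}$. *)

(* Group ring A[L] modelled with multinomials' {malg A[L]}
   (finitely supported functions L -> A, basis delta_l = << l >>);
   multiplication (convolution) defined here since monalg's ring structure
   requires a monomial (non-group) monoid. *)
From HB Require Import structures.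
From mathcomp Require Import all_boot all_algebra finmap.
From mathcomp Require Import monalg.

Set Implicit Arguments.
Unset Strict Implicit.
Unset Printing Implicit Defensive.

Import GRing.Theory.
Local Open Scope ring_scope.

Notation lat n := 'rV[int]_n.

Definition GR (A : comPzRingType) (n : nat) := {malg A[lat n]}.

Definition delta (A : comPzRingType) n (l : lat n) : GR A n := mkmalgU l (1 : A).

Definition grmul (A : comPzRingType) n (x y : GR A n) : GR A n :=
  \sum_(k <- msupp x) \sum_(k' <- msupp y) mkmalgU (k + k') (x@_k * y@_k').

Definition aug (A : comPzRingType) n (x : GR A n) : A := \sum_(k <- msupp x) x@_k.

Definition inJ (A : comPzRingType) n (x : GR A n) : Prop := aug x = 0.

Fixpoint inJpow (A : comPzRingType) n (k : nat) (x : GR A n) : Prop :=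
  match k with
  | 0 => True
  | k'.+1 => exists s : seq (GR A n * GR A n),
      (forall p, p \in s -> inJ p.1 /\ inJpow k' p.2) /\
      x = \sum_(p <- s) grmul p.1 p.2
  end.

Definition grmap (A : comPzRingType) n m (f : lat n -> lat m) (x : GR A n) : GR A m :=
  \sum_(k <- msupp x) mkmalgU (f k) x@_k.

(* Elements of R(L) = lim_k A[L]/J^k: a family (x_k)_k with x_k a
   representative of the class in A[L]/J^k, compatible under the
   projections A[L]/J^(k+1) -> A[L]/J^k. *)
Definition compat (A : comPzRingType) n (x : nat -> GR A n) : Prop :=
  forall k, inJpow k (x k.+1 - x k).

Definition Req (A : comPzRingType) n (x y : nat -> GR A n) : Prop :=
  forall k, inJpow k (x k - y k).

Definition phiR (A : comPzRingType) n m (f : lat n -> lat m)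
  (x : nat -> GR A n) : nat -> GR A m := fun k => grmap f (x k).

Definition phiR_bijective (A : comPzRingType) n m (f : lat n -> lat m) : Prop :=
  (forall x y : nat -> GR A n, compat x -> compat y ->
      Req (phiR f x) (phiR f y) -> Req x y) /\
  (forall z : nat -> GR A m, compat z ->
      exists2 x : nat -> GR A n, compat x & Req (phiR f x) z).

Definition inIm n m (M : 'M[int]_(n, m)) (y : lat m) : Prop :=
  exists l : lat n, y = l *m M.

(* s is a complete system of pairwise distinct representatives of L'/phi(L);
   then size s = #(L'/phi(L)). *)
Definition coset_reps n m (M : 'M[int]_(n, m)) (s : seq (lat m)) : Prop :=
  [/\ uniq s,
      (forall y, exists2 r, r \in s & inIm M (y - r)) &
      (forall r r', r \in s -> r' \in s -> inIm M (r - r') -> r = r')].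

From HB Require Import structures.
From mathcomp Require Import all_boot all_algebra finmap.
From mathcomp Require Import monalg ring.
From Stdlib Require Import ClassicalEpsilon.
Import GRing.Theory.
Local Open Scope ring_scope.

(* The multiplication-by-d map [d] of L acts on J^j/J^(j+1) as multiplication
   by d^j: for x in J one has [d]x = d x mod J^2, because
   delta_l^d - 1 = d (delta_l - 1) mod J^2, and the general case follows since
   J^(j+1) is spanned by products of elements of J and J^j.  So if d is a unit
   of A, [d] induces a bijection of every A[L]/J^k.  Since d = #(L'/phi(L))
   kills L'/phi(L), there is psi : L' -> L with psi phi = [d] and phi psi = [d];
   hence phi is levelwise injective and surjective modulo J^k, and both
   properties pass to the inverse limit. *)

Section GroupRingProduct.
Variables (A : comPzRingType) (n : nat).
Implicit Types x y z : GR A n.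

Lemma grmulEw {d d' : {fset lat n}} {x y} :
  (msupp x `<=` d)%fset -> (msupp y `<=` d')%fset ->
  grmul x y = \sum_(k <- d) \sum_(k' <- d') << x@_k * y@_k' *g (k + k')%R >>.
Proof.
move=> le_d le_d'; rewrite /grmul (big_fset_incl _ le_d) /=.
  apply/eq_bigr=> k _; apply/big_fset_incl => // k' _ /mcoeff_outdom ->.
  by rewrite mulr0 monalgU0.
by move=> k _ /mcoeff_outdom xk; rewrite big1 => // k' _; rewrite xk mul0r monalgU0.
Qed.

Lemma grmulC x y : grmul x y = grmul y x.
Proof.
rewrite /grmul exchange_big /=; apply/eq_bigr=> k _; apply/eq_bigr=> k' _.
by rewrite mulrC addrC.
Qed.

Lemma grmul0r y : grmul 0 y = 0.
Proof. by rewrite /grmul msupp0 big_seq_fset0. Qed.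

Lemma grmulUl (c : A) (k : lat n) y :
  grmul << c *g k >> y = \sum_(k' <- msupp y) << c * y@_k' *g (k + k')%R >>.
Proof.
rewrite (grmulEw msuppU_le (fsubset_refl _)) big_seq_fset1.
by apply/eq_bigr => k' _; rewrite mcoeffUU.
Qed.

Lemma grmulUU (c c' : A) (k k' : lat n) :
  grmul << c *g k >> << c' *g k' >> = << c * c' *g (k + k')%R >>.
Proof. by rewrite (grmulEw msuppU_le msuppU_le) !big_seq_fset1 !mcoeffUU. Qed.

Lemma grmul1l y : grmul << 1 *g 0 >> y = y.
Proof.
rewrite grmulUl [RHS]monalgE.
by apply/eq_bigr=> k _; rewrite mul1r add0r.
Qed.

Lemma grmulDl x y z : grmul (x + y) z = grmul x z + grmul y z.
Proof.
rewrite [in RHS](grmulEw (fsubsetUl _ (msupp y)) (fsubset_refl _)).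
rewrite [in RHS](grmulEw (fsubsetUr (msupp x) _) (fsubset_refl _)).
rewrite (grmulEw (msuppD_le _ _) (fsubset_refl _)) -big_split /=.
apply/eq_bigr=> k _; rewrite -big_split /=; apply/eq_bigr=> k' _.
by rewrite mcoeffD mulrDl monalgUD.
Qed.

Lemma grmulDr x y z : grmul x (y + z) = grmul x y + grmul x z.
Proof. by rewrite !(grmulC x) grmulDl. Qed.

Lemma grmulA x y z : grmul x (grmul y z) = grmul (grmul x y) z.
Proof.
have grmul_suml (u v : GR A n) : grmul u v = \sum_(k <- msupp u) grmul << u@_k *g k >> v.
  by apply/eq_bigr=> k _; rewrite grmulUl.
pose sumDl (v : GR A n) := big_morph (fun w => grmul w v) (fun _ _ => grmulDl _ _ v) (grmul0r v).
pose sumDr (u : GR A n) := big_morph (grmul u) (fun _ _ => grmulDr u _ _)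
  (etrans (grmulC u 0) (grmul0r u)).
rewrite [RHS]sumDl grmul_suml; apply/eq_bigr=> k _.
rewrite [LHS]sumDr [RHS]sumDl; apply/eq_bigr=> k' _.
rewrite [LHS]sumDr grmulUl; apply/eq_bigr=> k'' _.
by rewrite grmulUU mulrA addrA.
Qed.

End GroupRingProduct.

HB.instance Definition _ (A : comPzRingType) (n : nat) :=
  GRing.Zmodule.on (GR A n).
HB.instance Definition _ (A : comPzRingType) (n : nat) :=
  GRing.Zmodule_isComPzRing.Build (GR A n)
  (@grmulA A n) (@grmulC A n) (@grmul1l A n) (@grmulDl A n).

Lemma mulGRE (A : comPzRingType) n (x y : GR A n) :
  x * y = \sum_(k <- msupp x) \sum_(k' <- msupp y) << x@_k * y@_k' *g (k + k')%R >>.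
Proof. by []. Qed.

Lemma mulGRUU (A : comPzRingType) n (c c' : A) (k k' : lat n) :
  (<< c *g k >> : GR A n) * << c' *g k' >> = << c * c' *g (k + k')%R >>.
Proof. exact: grmulUU. Qed.

Section Augmentation.
Context {A : comPzRingType} {n : nat}.
Implicit Types x y : GR A n.

Lemma augEw {d : {fset lat n}} {x} : (msupp x `<=` d)%fset ->
  aug x = \sum_(k <- d) x@_k.
Proof. by move=> le_d; rewrite /aug (big_fset_incl _ le_d) // => k _ /mcoeff_outdom. Qed.

Lemma augU (c : A) (k : lat n) : aug << c *g k >> = c.
Proof. by rewrite (augEw msuppU_le) big_seq_fset1 mcoeffUU. Qed.

Lemma aug_is_nmod_morphism : nmod_morphism (@aug A n).
Proof.
split=> [|x y]; first by rewrite /aug msupp0 big_seq_fset0.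
rewrite (augEw (msuppD_le x y)) (augEw (fsubsetUl _ (msupp y))).
rewrite (augEw (fsubsetUr (msupp x) _)) -big_split.
by apply: eq_bigr => k _; rewrite mcoeffD.
Qed.

HB.instance Definition _ :=
  GRing.isNmodMorphism.Build (GR A n) A (@aug A n) aug_is_nmod_morphism.

Lemma aug_is_monoid_morphism : monoid_morphism (@aug A n).
Proof.
split=> [|x y]; first exact: augU.
rewrite mulGRE raddf_sum [aug x]/aug [aug y]/aug mulr_suml; apply: eq_bigr => k _.
by rewrite raddf_sum mulr_sumr; apply: eq_bigr => k' _; apply: augU.
Qed.

HB.instance Definition _ :=
  GRing.isMonoidMorphism.Build (GR A n) A (@aug A n) aug_is_monoid_morphism.

End Augmentation.

Section AugmentationPowers.
Context {A : comPzRingType} {n : nat}.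
Implicit Types x y : GR A n.

Lemma inJpow0 k : inJpow k (0 : GR A n).
Proof. by case: k => // k; exists [::]; rewrite big_nil. Qed.

Lemma inJpowD {k x y} : inJpow k x -> inJpow k y -> inJpow k (x + y).
Proof.
case: k => // k [s [Hs ->]] [t [Ht ->]]; exists (s ++ t); split; last by rewrite big_cat.
by move=> p; rewrite mem_cat => /orP[/Hs|/Ht].
Qed.

Lemma inJpowMl {k} w {x} : inJpow k x -> inJpow k (w * x).
Proof.
case: k => // k [s [Hs ->]]; exists [seq (w * p.1, p.2) | p <- s]; split.
  move=> _ /mapP[p ps ->] /=; have [Jp1 Jp2] := Hs p ps.
  by rewrite /inJ rmorphM /= Jp1 mulr0.
by rewrite big_map [w * _]mulr_sumr; apply: eq_bigr => p _; rewrite /= mulrA.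
Qed.

Lemma inJpowN {k x} : inJpow k x -> inJpow k (- x).
Proof. by rewrite -mulN1r; apply: inJpowMl. Qed.

Lemma inJpowB {k x y} : inJpow k x -> inJpow k y -> inJpow k (x - y).
Proof. by move=> Jx /inJpowN; apply: inJpowD. Qed.

Lemma inJpow_sum k (I : Type) (r : seq I) (P : pred I) (F : I -> GR A n) :
  (forall i, P i -> inJpow k (F i)) -> inJpow k (\sum_(i <- r | P i) F i).
Proof. by move=> JF; apply: big_ind => //; [apply: inJpow0 | exact: @inJpowD]. Qed.

Lemma inJpowS_mul {k x y} : inJ x -> inJpow k y -> inJpow k.+1 (x * y).
Proof.
by move=> Jx Jy; exists [:: (x, y)]; split; [move=> p /[1!inE] /eqP -> | rewrite big_seq1].
Qed.

Lemma inJpow1 {x} : inJ x -> inJpow 1 x.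
Proof. by move=> Jx; rewrite -[x]mulr1; apply: inJpowS_mul. Qed.

Lemma inJpowSW {k x} : inJpow k.+1 x -> inJpow k x.
Proof.
elim: k x => // k IH x [s [Hs ->]]; rewrite big_seq; apply: inJpow_sum => p ps.
by have [Jp1 /IH Jp2] := Hs p ps; apply: inJpowS_mul.
Qed.

Lemma inJpow_le {j k x} : (j <= k)%N -> inJpow k x -> inJpow j x.
Proof.
move=> /subnK <-; elim: (k - j)%N => // i IH.
by rewrite addSn => /inJpowSW.
Qed.

Lemma inJpowM {i j x y} : inJpow i x -> inJpow j y -> inJpow (i + j) (x * y).
Proof.
elim: i x => [|i IH] x; first by move=> _ /(inJpowMl x).
move=> [s [Hs ->]] Jy; rewrite mulr_suml big_seq addSn; apply: inJpow_sum => p ps.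
by have [Jp1 Jp2] := Hs p ps; rewrite -mulrA; apply: inJpowS_mul; last exact: IH.
Qed.

End AugmentationPowers.

Section GroupRingMap.
Context {A : comPzRingType} {n m : nat} (f : lat n -> lat m).
Implicit Types x y : GR A n.

Lemma grmapEw {d : {fset lat n}} {x} : (msupp x `<=` d)%fset ->
  grmap f x = \sum_(k <- d) << x@_k *g f k >>.
Proof.
move=> le_d; rewrite /grmap (big_fset_incl _ le_d) // => k _ /mcoeff_outdom ->.
exact: monalgU0.
Qed.

Lemma grmapU (c : A) (k : lat n) : grmap f << c *g k >> = << c *g f k >>.
Proof. by rewrite (grmapEw msuppU_le) big_seq_fset1 mcoeffUU. Qed.

Lemma grmap_is_nmod_morphism : nmod_morphism (@grmap A n m f).
Proof.
split=> [|x y]; first by rewrite /grmap msupp0 big_seq_fset0.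
rewrite (grmapEw (msuppD_le x y)) (grmapEw (fsubsetUl _ (msupp y))).
rewrite (grmapEw (fsubsetUr (msupp x) _)) -big_split.
by apply: eq_bigr => k _; rewrite mcoeffD monalgUD.
Qed.

HB.instance Definition _ :=
  GRing.isNmodMorphism.Build (GR A n) (GR A m) (@grmap A n m f)
    grmap_is_nmod_morphism.

Lemma grmapB x y : grmap f (x - y) = grmap f x - grmap f y.
Proof. exact: raddfB. Qed.

Lemma grmap_sum (I : Type) (r : seq I) (P : pred I) (F : I -> GR A n) :
  grmap f (\sum_(i <- r | P i) F i) = \sum_(i <- r | P i) grmap f (F i).
Proof. exact: raddf_sum. Qed.

Lemma aug_grmap x : aug (grmap f x) = aug x.
Proof. by rewrite /grmap raddf_sum; apply: eq_bigr => k _; apply: augU. Qed.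

Hypothesis f_additive : {morph f : a b / a + b}.

Lemma grmapM x y : grmap f (x * y) = grmap f x * grmap f y.
Proof.
rewrite mulGRE grmap_sum [grmap f x]/grmap mulr_suml; apply: eq_bigr => k _.
rewrite grmap_sum [grmap f y]/grmap mulr_sumr; apply: eq_bigr => k' _.
by rewrite grmapU mulGRUU f_additive.
Qed.

Lemma grmap1 : grmap f (1 : GR A n) = 1.
Proof.
have f0 : f 0 = 0 by apply/(addrI (f 0)); rewrite -f_additive !addr0.
by rewrite grmapU f0.
Qed.

Lemma inJpow_grmap {k x} : inJpow k x -> inJpow k (grmap f x).
Proof.
elim: k x => // k IH x [s [Hs ->]]; rewrite grmap_sum big_seq.
apply: inJpow_sum => p ps; have [Jp1 Jp2] := Hs p ps.
by rewrite grmapM; apply: inJpowS_mul; [rewrite /inJ aug_grmap | exact: IH].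
Qed.

End GroupRingMap.

Lemma grmap_comp {A : comPzRingType} {n m p} {f : lat n -> lat m} {g : lat m -> lat p}
  {h : lat n -> lat p} (x : GR A n) :
  (forall l, g (f l) = h l) -> grmap g (grmap f x) = grmap h x.
Proof.
by move=> gfh; rewrite [grmap f x]/grmap grmap_sum; apply: eq_bigr => k _; rewrite grmapU gfh.
Qed.

Section DeltaGenerators.
Context {A : comPzRingType} {n : nat}.

Lemma delta_mulrn (k : lat n) e :
  delta A (k *+ e) = delta A k ^+ e.
Proof.
elim: e => [|e IH]; first by rewrite mulr0n expr0.
by rewrite exprS -IH /delta mulGRUU mulr1 mulrS.
Qed.

Lemma aug_delta (k : lat n) : aug (delta A k) = 1.
Proof. exact: augU. Qed.

Lemma inJ_expr_sub1 (t : GR A n) i : aug t = 1 -> inJ (t ^+ i - 1).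
Proof. by move=> augt; rewrite /inJ rmorphB rmorphXn rmorph1 /= augt expr1n subrr. Qed.

Lemma inJpow2_expr_sub1 (t : GR A n) e :
  aug t = 1 -> inJpow 2 (t ^+ e - 1 - e%:R * (t - 1)).
Proof.
move=> augt; elim: e => [|e IH]; first by rewrite expr0 subrr mul0r subrr; apply: inJpow0.
have -> : t ^+ e.+1 - 1 - e.+1%:R * (t - 1) =
    (t ^+ e - 1 - e%:R * (t - 1)) + (t - 1) * (t ^+ e - 1).
  by rewrite exprSr mulrSr; ring.
apply: inJpowD IH _; apply: (@inJpowM _ _ 1 1); apply: inJpow1.
  by have := inJ_expr_sub1 _ 1 augt; rewrite expr1.
exact: inJ_expr_sub1.
Qed.

Lemma const_mul_delta_sub1 (c : A) (k : lat n) :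
  (<< c *g 0 >> : GR A n) * (delta A k - 1) = << c *g k >> - << c *g 0 >>.
Proof. by rewrite mulrBr; congr (_ - _); [rewrite mulGRUU mulr1 add0r | exact: mulr1]. Qed.

Lemma inJ_sum_delta_sub1 {x : GR A n} :
  inJ x -> x = \sum_(k <- msupp x) (<< x@_k *g 0 >> : GR A n) * (delta A k - 1).
Proof.
move=> Jx; under [RHS]eq_bigr => k _ do rewrite const_mul_delta_sub1.
have sum_const : \sum_(k <- msupp x) (<< x@_k *g 0 >> : GR A n) = << aug x *g 0 >>.
  by rewrite raddf_sum.
by rewrite sumrB [X in _ - X]sum_const Jx monalgU0 subr0 -monalgE.
Qed.

End DeltaGenerators.

Lemma mul_sub_mul_expand (R : comPzRingType) (a b Fa Fb c e : R) :
  Fa * Fb - c * e * (a * b) =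
  c * a * (Fb - e * b) + (Fa - c * a) * (e * b) + (Fa - c * a) * (Fb - e * b).
Proof. ring. Qed.

Section MultiplicationMap.
Context {A : comPzRingType} {n d : nat}.
Implicit Types x z : GR A n.
Local Notation F := (grmap (A := A) (fun l : lat n => l *+ d)).
Local Notation D := (d%:R : GR A n).

Lemma mulrn_additive : {morph (fun l : lat n => l *+ d) : a b / a + b}.
Proof. by move=> a b; rewrite mulrnDl. Qed.

Lemma grmap_mulrn_const (c : A) x :
  F ((<< c *g 0 >> : GR A n) * x) = (<< c *g 0 >> : GR A n) * F x.
Proof. by rewrite grmapM ?grmapU ?mul0rn //; apply: mulrn_additive. Qed.

Lemma grmap_mulrn_delta_sub1 (k : lat n) : F (delta A k - 1) = delta A k ^+ d - 1.
Proof.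
rewrite grmapB; congr (_ - _); last exact: grmap1 mulrn_additive.
by rewrite grmapU -delta_mulrn.
Qed.

Lemma grmap_mulrn_inJ {x} : inJ x -> inJpow 2 (F x - D * x).
Proof.
move=> Jx; rewrite [in F x](inJ_sum_delta_sub1 Jx) [in D * x](inJ_sum_delta_sub1 Jx).
rewrite grmap_sum mulr_sumr -sumrB; apply: inJpow_sum => k _.
rewrite grmap_mulrn_const grmap_mulrn_delta_sub1 mulrCA -mulrBr; apply: inJpowMl.
exact/inJpow2_expr_sub1/aug_delta.
Qed.

Lemma grmap_mulrn_inJpow {j z} : inJpow j z -> inJpow j.+1 (F z - D ^+ j * z).
Proof.
elim: j z => [|j IH] z.
  by move=> _; rewrite expr0 mul1r; apply: inJpow1; rewrite /inJ rmorphB /= aug_grmap subrr.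
move=> [s [Hs ->]]; rewrite grmap_sum mulr_sumr -sumrB big_seq; apply: inJpow_sum => p ps.
have [Jx Jy] := Hs p ps.
have Fx := grmap_mulrn_inJ Jx; have Fy := IH _ Jy.
rewrite -[grmul _ _]/(p.1 * p.2) grmapM ?exprS ?mul_sub_mul_expand; last exact: mulrn_additive.
apply: inJpowD; first apply: inJpowD.
- by rewrite -mulrA; apply: inJpowMl; apply: (inJpowM (inJpow1 Jx) Fy).
- by apply: (inJpowM Fx); apply: inJpowMl.
- by apply: (inJpow_le _ (inJpowM Fx Fy)); rewrite add2n.
Qed.

Context {U : GR A n}.
Hypothesis mulrn_inv : U * D = 1.

Lemma grmap_mulrn_reflect_inJpow k z : inJpow k (F z) -> inJpow k z.
Proof.
move=> JFz; suff Jz j : (j <= k)%N -> inJpow j z by apply: Jz.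
elim: j => // j IH ltjk; have Jz := IH (ltnW ltjk).
have JDz : inJpow j.+1 (D ^+ j * z).
  rewrite -[_ * z](subKr (F z)); apply: inJpowB (inJpow_le ltjk JFz) _.
  exact: grmap_mulrn_inJpow.
have -> : z = U ^+ j * (D ^+ j * z) by rewrite mulrA -exprMn mulrn_inv expr1n mul1r.
exact: inJpowMl.
Qed.

Lemma grmap_mulrn_approx k z : exists x, inJpow k (z - F x).
Proof.
elim: k => [|k [x Jx]]; first by exists 0.
have Jw := grmap_mulrn_inJpow (inJpowMl (U ^+ k) Jx).
have DUz : D ^+ k * (U ^+ k * (z - F x)) = z - F x.
  by rewrite mulrA -exprMn [D * U]mulrC mulrn_inv expr1n mul1r.
exists (x + U ^+ k * (z - F x)).
have sub_addr (a b c : GR A n) : a - (b + c) = - (c - (a - b)) by ring.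
by rewrite raddfD sub_addr -{2}DUz; apply: inJpowN.
Qed.

End MultiplicationMap.

Lemma const_mulrn_inv {A : comPzRingType} {p} {u : A} {d : nat} :
  d%:R * u = 1 -> (<< u *g 0 >> : GR A p) * d%:R = 1.
Proof.
by move=> d_unit; rewrite -[d%:R]/(1 *+ d) -monalgUMn mulGRUU addr0 mulrC d_unit.
Qed.

Section CofactorIsomorphism.
Context {A : comPzRingType} {n m d : nat} {f : lat n -> lat m} {g : lat m -> lat n}.
Hypothesis g_additive : {morph g : a b / a + b}.
Hypothesis gf : forall l, g (f l) = l *+ d.
Hypothesis fg : forall y, f (g y) = y *+ d.
Context {u : A}.
Hypothesis d_unit : d%:R * u = 1.

Lemma grmap_reflect_inJpow k (x : GR A n) : inJpow k (grmap f x) -> inJpow k x.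
Proof.
move=> /(inJpow_grmap _ g_additive); rewrite (grmap_comp _ gf).
exact: grmap_mulrn_reflect_inJpow (const_mulrn_inv d_unit) k x.
Qed.

Lemma grmap_approx k (z : GR A m) : exists x, inJpow k (z - grmap f x).
Proof.
have [w Jw] := grmap_mulrn_approx (const_mulrn_inv d_unit) k z.
by exists (grmap g w); rewrite (grmap_comp _ fg).
Qed.

Lemma phiR_bijective_cofactor : phiR_bijective A f.
Proof.
split=> [x y _ _ fxy k | z z_compat].
  by apply: grmap_reflect_inJpow; rewrite grmapB; apply: fxy.
have approx k : {x | inJpow k (z k - grmap f x)}.
  exact/constructive_indefinite_description/grmap_approx.
exists (fun k => sval (approx k)) => k; last first.
  by rewrite -opprB; apply/inJpowN/(svalP (approx k)).
apply: grmap_reflect_inJpow; rewrite grmapB.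
have sub_telescope (a b c e : GR A m) : b - e = - (a - b) + (a - c) + (c - e) by ring.
rewrite (sub_telescope (z k.+1) _ (z k)).
apply: inJpowD (inJpowD _ (z_compat k)) (svalP (approx k)).
exact/inJpowN/inJpowSW/(svalP (approx k.+1)).
Qed.

End CofactorIsomorphism.

Section LatticeCofactor.
Context {n m : nat} {M : 'M[int]_(n, m)}.

Lemma inIm_sum {I : Type} (r : seq I) {F : I -> lat m} :
  (forall i, inIm M (F i)) -> inIm M (\sum_(i <- r) F i).
Proof.
move=> ImF; elim: r => [|i r [l IH]]; first by exists 0; rewrite big_nil mul0mx.
by have [l' El'] := ImF i; exists (l' + l); rewrite big_cons IH El' mulmxDl.
Qed.

Lemma coset_reps_annihilate {s} y : coset_reps M s -> inIm M (y *+ size s).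
Proof.
move=> [s_uniq s_cover s_sep].
have rep r : {r' | r' \in s /\ inIm M (y + r - r')}.
  apply: constructive_indefinite_description.
  by have [r' r's Imr] := s_cover (y + r); exists r'.
(* rho permutes s, so summing y + r - rho r over r in s leaves y *+ size s. *)
pose rho r := sval (rep r).
have rho_inj : {in s &, injective rho}.
  move=> r r' rs r's rho_rr'; apply: s_sep => //.
  have [[_ [l El]] [_ [l' El']]] := (svalP (rep r), svalP (rep r')).
  exists (l - l'); rewrite mulmxBl -El -El' -/(rho r) -/(rho r') rho_rr'.
  by rewrite opprB addrA subrK opprD addrA [y + r]addrC addrK.
have rho_perm : perm_eq [seq rho r | r <- s] s.
  have rho_uniq : uniq [seq rho r | r <- s] by rewrite map_inj_in_uniq.
  have rho_sub : {subset [seq rho r | r <- s] <= s}.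
    by move=> _ /mapP[r _ ->]; exact: (svalP (rep r)).1.
  have [_ rho_s] := uniq_min_size rho_uniq rho_sub (eq_leq (esym (size_map rho s))).
  exact: uniq_perm.
have := inIm_sum s (fun r => (svalP (rep r)).2).
rewrite sumrB big_split /= -/(\sum_(r <- s) rho r) -(big_map rho xpredT id).
by rewrite (perm_big _ rho_perm) addrK big_const_seq count_predT iter_addr_0.
Qed.

Lemma isogeny_cofactor {s} :
  injective (fun l : lat n => l *m M) -> coset_reps M s ->
  exists g : lat m -> lat n, [/\ {morph g : a b / a + b},
    forall l, g (l *m M) = l *+ size s & forall y, g y *m M = y *+ size s].
Proof.
move=> M_inj reps.
have lift (y : lat m) : {l | y *+ size s = l *m M}.
  exact: constructive_indefinite_description (coset_reps_annihilate y reps).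
exists (fun y => sval (lift y)); split=> [a b | l | y]; last by rewrite -(svalP (lift y)).
  by apply: M_inj; rewrite /= mulmxDl -!(svalP (lift _)) mulrnDl.
by apply: M_inj; rewrite /= -(svalP (lift _)) -[(l *+ _) *m M]/(mulmxr M _) raddfMn.
Qed.

End LatticeCofactor.

Theorem mainTheorem10 (A : comPzRingType) (n m : nat) (M : 'M[int]_(n, m)) :
  injective (fun l : 'rV[int]_n => l *m M) ->
  (exists2 s : seq 'rV[int]_m, coset_reps M s &
     exists u : A, (size s)%:R * u = 1) ->
  phiR_bijective A (fun l : 'rV[int]_n => l *m M).
Proof.
move=> M_inj [s reps [u d_unit]].
have [g [g_additive gM Mg]] := isogeny_cofactor M_inj reps.
exact: (phiR_bijective_cofactor g_additive gM Mg d_unit).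
Qed.
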